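(* In the parallel-links routing game with homogeneous costs described in the context and $N=2$ users, for each user $k\in\{1,2\}$ there exists a feasible routing profile $\bar{\mathbf f}$ whose link totals equal the system-optimal link flows $f^*_l$ and such that $J^k(\bar{\mathbf f})\ge\hat J^k$.
   Context: Parallel-links routing game: users $\mathcal N=\{1,\dots,N\}$ share parallel links $\mathcal L=\{1,\dots,L\}$ from a common source to a common destination; link $l$ has capacity $c_l$. User $i$ has demand $r^i>0$, $R=\sum_ir^i<\sum_lc_l$. A routing strategy of user $i$ is $\mathbf f^i=(f^i_l)_l$ with $f^i_l\ge0$, $\sum_lf^i_l=r^i$; $f_l=\sum_if^i_l$. Homogeneous costs: $J^i(\mathbf f)=\sum_lf^i_lT_l(f_l)$, each $T_l:[0,\infty)\to[0,\infty)$ strictly increasing, convex, continuously differentiable, with $T_l(f_l)=T(c_l-f_l)$ for $f_l<c_l$ and $T_l(f_l)=\infty$ for $f_l\ge c_l$, for a single link-independent function $T$ with $T(c_l-f_l)$ strictly increasing in $f_l$. NEP: the unique feasible $\hat{\mathbf f}$ in which each user's strategy minimizes its cost given the others'; $\hat J^i=J^i(\hat{\mathbf f})$. $(f^*_l)$ are the link totals minimizing $\sum_lf_lT_l(f_l)$ over feasible profiles. *)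

From HB Require Import structures.
From mathcomp Require Import all_boot all_order all_algebra.
From mathcomp Require Import all_classical all_reals all_analysis.
Set Implicit Arguments. Unset Strict Implicit. Unset Printing Implicit Defensive.
Import Order.TTheory GRing.Theory Num.Theory.
Import numFieldNormedType.Exports.
Local Open Scope classical_set_scope.
Local Open Scope ring_scope.

Section Routing.
Variables (R : realType) (N L : nat).

Definition profile := 'I_N -> 'I_L -> R.

Definition tot (f : profile) (l : 'I_L) : R := \sum_(i < N) f i l.

Definition strategy (ri : R) (s : 'I_L -> R) : Prop :=
  (forall l, 0 <= s l) /\ \sum_(l < L) s l = ri.

Definition feasible (r : 'I_N -> R) (f : profile) : Prop :=
  forall i, strategy (r i) (f i).

Definition Tl (T : R -> R) (cl : R) (x : R) : \bar R :=
  if x < cl then (T (cl - x))%:E else +oo%E.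

(* Cost of user i: J^i(f) = sum_l f^i_l T_l(f_l)  (with 0 * +oo = 0). *)
Definition J (T : R -> R) (c : 'I_L -> R) (f : profile) (i : 'I_N) : \bar R :=
  (\sum_(l < L) (f i l)%:E * Tl T (c l) (tot f l))%E.

Definition syscost (T : R -> R) (c : 'I_L -> R) (g : 'I_L -> R) : \bar R :=
  (\sum_(l < L) (g l)%:E * Tl T (c l) (g l))%E.

Definition upd (f : profile) (i : 'I_N) (s : 'I_L -> R) : profile :=
  fun j l => if j == i then s l else f j l.

Definition NEP (T : R -> R) (c : 'I_L -> R) (r : 'I_N -> R) (f : profile) : Prop :=
  feasible r f /\
  forall i (s : 'I_L -> R), strategy (r i) s -> (J T c f i <= J T c (upd f i s) i)%E.

Definition good_link_cost (T : R -> R) (cl : R) : Prop :=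
  let g := fun x => T (cl - x) in
  let D := [set x : R | 0 <= x < cl] in
  (forall x, D x -> 0 <= g x) /\
  (forall x y, D x -> D y -> x < y -> g x < g y) /\
  (forall x y t, D x -> D y -> 0 <= t <= 1 ->
     g (t * x + (1 - t) * y) <= t * g x + (1 - t) * g y) /\
  (exists g' : R -> R,
     {within D, continuous g} /\ {within D, continuous g'} /\
     (forall x, 0 < x < cl -> is_derive x 1 g (g' x))).

End Routing.

(* In an equilibrium, every user's flow on a link is at most the optimal total
   of that link: otherwise shifting flow along a suitable pair of links would
   contradict either the optimality or the Nash property, because the marginal
   cost of a convex increasing link cost grows with the load.  With two users,
   user [k] may therefore route [fstar - fhat_j] for the other user [j], which
   realises the optimal link totals and, by the Nash property, costs [k] at
   least its equilibrium cost. *)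
From HB Require Import structures.
From mathcomp Require Import all_boot all_order all_algebra.
From mathcomp Require Import all_classical all_reals all_analysis.
From mathcomp Require Import ring lra.
Set Implicit Arguments. Unset Strict Implicit. Unset Printing Implicit Defensive.
Import Order.TTheory GRing.Theory Num.Theory.
Import numFieldNormedType.Exports.
Local Open Scope ring_scope.

Section MarginalCost.
Variables (R : realFieldType) (G : R -> R) (c : R).
Hypothesis G_incr : forall x y, 0 <= x -> x < y -> y < c -> G x < G y.
Hypothesis G_convex : forall x y t, 0 <= x < c -> 0 <= y < c -> 0 <= t <= 1 ->
  G (t * x + (1 - t) * y) <= t * G x + (1 - t) * G y.

Lemma le_of_incr x y : 0 <= x -> x <= y -> y < c -> G x <= G y.
Proof.
move=> x0; rewrite le_eqVlt => /predU1P[-> //|xy yc].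
exact/ltW/G_incr.
Qed.

(* Both [p + e] and [q] are convex combinations of [p] and [q + e]. *)
Lemma increment_le p q e : 0 <= p -> p <= q -> 0 < e -> q + e < c ->
  G (p + e) - G p <= G (q + e) - G q.
Proof.
move=> p0 pq e0 qe.
pose t := (q - p) / (q + e - p).
have t01 : 0 <= t <= 1 by apply/andP; split; rewrite /t ?divr_ge0 ?ler_pdivrMr; lra.
have t01' : 0 <= 1 - t <= 1 by lra.
have hp : 0 <= p < c by apply/andP; split; lra.
have hq : 0 <= q + e < c by apply/andP; split; lra.
have := G_convex hp hq t01; have := G_convex hp hq t01'.
have -> : t * p + (1 - t) * (q + e) = p + e by rewrite /t; field; lra.
have -> : (1 - t) * p + (1 - (1 - t)) * (q + e) = q by rewrite /t; field; lra.
lra.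
Qed.

Lemma scaled_increment_le a a' u u' e : 0 < e -> 0 <= a <= a' -> 0 <= u <= u' ->
  u' + e < c -> a * (G (u + e) - G u) <= a' * (G (u' + e) - G u').
Proof.
move=> e0 /andP[a0 aa] /andP[u0 uu] uc.
have d0 : 0 <= G (u + e) - G u by rewrite subr_ge0 le_of_incr //; lra.
have dd := increment_le u0 uu e0 uc.
by apply: ler_pM.
Qed.

Lemma marginal_cost_le a a' u u' e : 0 < e -> 0 <= a <= a' -> 0 <= u <= u' ->
  u' + e < c -> (a + e) * G (u + e) - a * G u <= (a' + e) * G (u' + e) - a' * G u'.
Proof.
move=> e0 ha hu uc; have := scaled_increment_le e0 ha hu uc.
have : G (u + e) <= G (u' + e) by apply: le_of_incr; lra.
nra.
Qed.

Lemma marginal_cost_lt a a' u u' e : 0 < e -> 0 <= a <= a' -> 0 <= u -> u < u' ->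
  u' + e < c -> (a + e) * G (u + e) - a * G u < (a' + e) * G (u' + e) - a' * G u'.
Proof.
move=> e0 ha u0 uu uc.
have hu : 0 <= u <= u' by apply/andP; split; lra.
have := scaled_increment_le e0 ha hu uc.
have : G (u + e) < G (u' + e) by apply: G_incr; lra.
move: u0 uu; nra.
Qed.

End MarginalCost.

Section GoodLinkCost.
Variables (R : realType) (T : R -> R) (cl : R).
Hypothesis hT : good_link_cost T cl.

Lemma good_link_cost_ge0 x : 0 <= x < cl -> 0 <= T (cl - x).
Proof. by case: hT => + _; apply. Qed.

Lemma good_link_cost_incr x y : 0 <= x -> x < y -> y < cl -> T (cl - x) < T (cl - y).
Proof.
move=> x0 xy ycl; case: hT => _ [+ _]; apply; rewrite /= ?x0 ?ycl //; lra.
Qed.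

Lemma good_link_cost_convex x y t : 0 <= x < cl -> 0 <= y < cl -> 0 <= t <= 1 ->
  T (cl - (t * x + (1 - t) * y)) <= t * T (cl - x) + (1 - t) * T (cl - y).
Proof. by case: hT => _ [_ [+ _]]; apply. Qed.

Lemma link_cost_ge0 a x : 0 <= a -> 0 <= x -> (0 <= a%:E * Tl T cl x)%E.
Proof.
move=> a0 x0; apply: mule_ge0; first by rewrite lee_fin.
rewrite /Tl; case: ifP => // xcl.
by rewrite lee_fin good_link_cost_ge0 // x0.
Qed.

End GoodLinkCost.

Section LinkCostSums.
Variables (R : realType) (L : nat) (c : 'I_L -> R) (T : R -> R).
Hypothesis hT : forall l, good_link_cost T (c l).

Lemma link_costs_fin (a g : 'I_L -> R) : (forall t, a t = 0 \/ g t < c t) ->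
  (\sum_t (a t)%:E * Tl T (c t) (g t))%E = (\sum_t a t * T (c t - g t))%:E.
Proof.
move=> h; rewrite -sumEFin; apply: eq_bigr => t _.
case: (h t) => [->|gc]; first by rewrite mul0e mul0r.
by rewrite /Tl gc EFinM.
Qed.

Lemma link_costs_infty (a g : 'I_L -> R) l :
  (forall t, 0 <= a t) -> (forall t, 0 <= g t) -> 0 < a l -> c l <= g l ->
  (\sum_t (a t)%:E * Tl T (c t) (g t))%E = +oo%E.
Proof.
move=> a0 g0 al cg; rewrite (bigD1 l) //= /Tl ltNge cg /= gt0_muley ?lte_fin //.
apply: addye; rewrite -ltNye; apply: (lt_le_trans ltNy0).
by apply: sume_ge0 => t _; apply: link_cost_ge0.
Qed.

End LinkCostSums.

Section FlowSums.
Variables (R : realType) (L : nat).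

Definition move_flow (g : 'I_L -> R) (l m : 'I_L) (e : R) (t : 'I_L) : R :=
  if t == l then g t - e else if t == m then g t + e else g t.

Lemma sum_move_flow (F : 'I_L -> R -> R) g l m e : l != m ->
  \sum_t F t (move_flow g l m e t) =
  \sum_t F t (g t) + (F l (g l - e) - F l (g l)) + (F m (g m + e) - F m (g m)).
Proof.
move=> lm; have ml : m != l by rewrite eq_sym.
rewrite (bigD1 l) // (bigD1 m) //= [\sum_t F t (g t)](bigD1 l) // (bigD1 m) //=.
rewrite /move_flow eqxx (negbTE ml) eqxx.
rewrite (eq_bigr (fun t => F t (g t))); first by ring.
by move=> t /andP[tl tm]; rewrite (negbTE tl) (negbTE tm).
Qed.

Lemma sum_move_flow_id g l m e : l != m -> \sum_t move_flow g l m e t = \sum_t g t.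
Proof. by move=> lm; rewrite (sum_move_flow (fun _ x => x)) //; ring. Qed.

Lemma move_flow_ge0 g l m e : (forall t, 0 <= g t) -> 0 <= e <= g l ->
  forall t, 0 <= move_flow g l m e t.
Proof.
move=> g0 he t; rewrite /move_flow.
case: ifP => [/eqP ->|_]; first by rewrite subr_ge0; case/andP: he.
by case: ifP => _ //; apply: addr_ge0 => //; case/andP: he.
Qed.

Lemma exists_lt_of_sum_eq (u v : 'I_L -> R) l :
  \sum_t u t = \sum_t v t -> v l < u l -> exists m, u m < v m.
Proof.
move=> uv vu; case: (boolP [exists m, u m < v m]) => [/existsP //|].
rewrite negb_exists => /forallP le_vu.
have d0 t : 0 <= u t - v t by rewrite subr_ge0 leNgt; apply: le_vu.
have := psumr_eq0P (fun t _ => d0 t) _ (isT : true) (i := l).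
by rewrite sumrB uv subrr => /(_ erefl) /subr0_eq; lra.
Qed.

Lemma exists_strategy_below_cap (c a : 'I_L -> R) rho :
  (forall t, 0 <= a t) -> 0 <= rho -> rho + \sum_t a t < \sum_t c t ->
  exists s, strategy rho s /\ forall t, s t = 0 \/ a t + s t < c t.
Proof.
move=> a0 rho0 cap.
pose w t := Num.max (c t - a t) 0.
have w0 t : 0 <= w t by rewrite /w le_max lexx orbT.
pose W := \sum_t w t.
have W_gt : rho < W.
  suff : \sum_t (c t - a t) <= W by rewrite sumrB; lra.
  by apply: ler_sum => t _; rewrite /w le_max lexx.
have q0 : 0 <= rho / W by apply: divr_ge0; lra.
have q1 : rho / W < 1 by rewrite ltr_pdivrMr ?mul1r //; lra.
exists (fun t => rho / W * w t); split; first split.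
- by move=> t; apply: mulr_ge0 q0 (w0 t).
- by rewrite -mulr_sumr divfK //; lra.
- move=> t; have [res0|res_gt] := leP (c t - a t) 0.
    by left; rewrite /w max_r // mulr0.
  by right; rewrite /w max_l ?ltW //; nra.
Qed.

End FlowSums.

Section Profiles.
Variables (R : realType) (N L : nat) (r : 'I_N -> R).
Implicit Types (f : profile R N L) (s : 'I_L -> R).

Lemma upd_eq f i s : upd f i s i = s.
Proof. by rewrite /upd eqxx. Qed.

Lemma tot_upd f i s t : tot (upd f i s) t = tot f t - f i t + s t.
Proof.
rewrite /tot (bigD1 i) //= [in RHS](bigD1 i) //= /upd eqxx.
rewrite (eq_bigr (fun j => f j t)); first by ring.
by move=> j /negbTE ->.
Qed.

Lemma feasible_upd f i s : feasible r f -> strategy (r i) s -> feasible r (upd f i s).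
Proof. by move=> hf hs j; rewrite /upd; case: eqP => [->|]. Qed.

Lemma share_le_tot f i t : feasible r f -> f i t <= tot f t.
Proof.
move=> hf; rewrite /tot (bigD1 i) //= lerDl.
by apply: sumr_ge0 => j _; case: (hf j) => + _; apply.
Qed.

Lemma tot_ge0 f t : feasible r f -> 0 <= tot f t.
Proof. by move=> hf; apply: sumr_ge0 => i _; case: (hf i) => + _; apply. Qed.

Lemma sum_tot f : feasible r f -> \sum_t tot f t = \sum_i r i.
Proof.
move=> hf; rewrite /tot exchange_big; apply: eq_bigr => i _.
by case: (hf i).
Qed.

Lemma feasible_of_link_totals (g : 'I_L -> R) :
  (forall i, 0 <= r i) -> 0 < \sum_i r i -> (forall t, 0 <= g t) ->
  \sum_t g t = \sum_i r i -> exists f, feasible r f /\ tot f = g.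
Proof.
move=> r0 S0 g0 gS; exists (fun i t => g t * (r i / \sum_j r j)); split.
- move=> i; split; first by move=> t; rewrite mulr_ge0 ?divr_ge0 // ltW.
  by rewrite -mulr_suml gS mulrC divfK //; lra.
- by apply/funext => t; rewrite /tot -mulr_sumr -mulr_suml mulfV ?mulr1 //; lra.
Qed.

End Profiles.

Section OptimumAndEquilibrium.
Variables (R : realType) (N L : nat) (c : 'I_L -> R) (r : 'I_N -> R) (T : R -> R).
Hypotheses (hr : forall i, 0 <= r i) (hR : \sum_i r i < \sum_l c l)
  (hT : forall l, good_link_cost T (c l)).
Variable fstar : 'I_L -> R.
Hypotheses (hstar_feas : exists f, feasible r f /\ forall l, tot f l = fstar l)
  (hstar_opt : forall f, feasible r f -> (syscost T c fstar <= syscost T c (tot f))%E).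

Lemma opt_ge0 t : 0 <= fstar t.
Proof. by case: hstar_feas => f [hf <-]; apply: tot_ge0 hf. Qed.

Lemma opt_sum : \sum_t fstar t = \sum_i r i.
Proof.
case: hstar_feas => f [hf hft]; rewrite -(sum_tot hf).
by apply: eq_bigr => t _; rewrite hft.
Qed.

Lemma opt_sum_gt0 t : 0 < fstar t -> 0 < \sum_i r i.
Proof.
move=> ft; rewrite -opt_sum (bigD1 t) //=; apply: ltr_pwDl => //.
by apply: sumr_ge0 => u _; apply: opt_ge0.
Qed.

(* Overloading a used link has infinite cost, whereas the demand can be spread
   at finite cost since it is below the total capacity. *)
Lemma opt_below_cap t : fstar t = 0 \/ fstar t < c t.
Proof.
have := opt_ge0 t; rewrite le_eqVlt => /predU1P[<-|ft]; [by left|right].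
rewrite ltNge; apply/negP => cap.
have [s [[s0 sS] sc]] : exists s, strategy (\sum_i r i) s /\
    forall t, s t = 0 \/ 0 + s t < c t.
  by apply: exists_strategy_below_cap; rewrite ?big1_eq ?addr0 ?sumr_ge0.
have [f [hf fs]] := feasible_of_link_totals hr (opt_sum_gt0 ft) s0 sS.
have := hstar_opt hf; rewrite fs /syscost (link_costs_infty hT _ _ ft cap) //.
  rewrite link_costs_fin ?leye_eq // => u.
  by case: (sc u) => [->|]; [left|rewrite add0r; right].
all: exact: opt_ge0.
Qed.

Lemma opt_move_ge l m e : l != m -> 0 < e <= fstar m -> fstar l + e < c l ->
  0 <= ((fstar l + e) * T (c l - (fstar l + e)) - fstar l * T (c l - fstar l))
     + ((fstar m - e) * T (c m - (fstar m - e)) - fstar m * T (c m - fstar m)).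
Proof.
move=> lm /andP[e0 em] lcap; have ml : m != l by rewrite eq_sym.
pose g := move_flow fstar m l e.
have g0 : forall t, 0 <= g t by apply: move_flow_ge0 opt_ge0 _; rewrite em ltW.
have gS : \sum_t g t = \sum_i r i by rewrite sum_move_flow_id // opt_sum.
have [f [hf fg]] := feasible_of_link_totals hr (opt_sum_gt0 (lt_le_trans e0 em)) g0 gS.
have := hstar_opt hf; rewrite fg /syscost !link_costs_fin ?lee_fin.
- by rewrite (sum_move_flow (fun t x => x * T (c t - x))) //; lra.
- move=> t; rewrite /g /move_flow; case: eqVneq => [->|_].
    by right; case: (opt_below_cap m) => zc; lra.
  by case: eqVneq => [->|_]; [right|exact: opt_below_cap].
- exact: opt_below_cap.
Qed.

Variable fhat : profile R N L.
Hypothesis hNE : NEP T c r fhat.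

Lemma NEP_feasible : feasible r fhat.
Proof. by case: hNE. Qed.

Lemma NEP_ge0 i t : 0 <= fhat i t.
Proof. by case: (NEP_feasible i) => + _; apply. Qed.

(* A user on an overloaded link pays an infinite cost, but could move its whole
   demand onto the residual capacity left by the other users at finite cost. *)
Lemma NEP_below_cap j t : fhat j t = 0 \/ tot fhat t < c t.
Proof.
have := NEP_ge0 j t; rewrite le_eqVlt => /predU1P[<-|jt]; [by left|right].
rewrite ltNge; apply/negP => cap.
pose a u := tot fhat u - fhat j u.
have a0 u : 0 <= a u by rewrite subr_ge0 (share_le_tot _ _ NEP_feasible).
have [s [hs sc]] : exists s, strategy (r j) s /\ forall u, s u = 0 \/ a u + s u < c u.
  apply: exists_strategy_below_cap => //.
  by rewrite sumrB (sum_tot NEP_feasible) //; case: (NEP_feasible j) => _ ->; rewrite addrC subrK.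
have := hNE.2 j s hs; rewrite /J (link_costs_infty hT _ _ jt cap).
- rewrite upd_eq link_costs_fin ?leye_eq // => u.
  by rewrite tot_upd; exact: sc.
- exact: NEP_ge0.
- by move=> u; apply: tot_ge0 NEP_feasible.
Qed.

Lemma NEP_move_ge j l m e : l != m -> 0 < e <= fhat j l -> tot fhat m + e < c m ->
  0 <= ((fhat j l - e) * T (c l - (tot fhat l - e)) - fhat j l * T (c l - tot fhat l))
     + ((fhat j m + e) * T (c m - (tot fhat m + e)) - fhat j m * T (c m - tot fhat m)).
Proof.
move=> lm /andP[e0 el] mcap.
have lcap : tot fhat l < c l by case: (NEP_below_cap j l) => //; lra.
pose s := move_flow (fhat j) l m e.
have hs : strategy (r j) s.
  split; first by apply: move_flow_ge0; [exact: NEP_ge0|rewrite el ltW].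
  by rewrite sum_move_flow_id //; case: (NEP_feasible j).
pose F t x := x * T (c t - (tot fhat t - fhat j t + x)).
have JE : \sum_t fhat j t * T (c t - tot fhat t) = \sum_t F t (fhat j t).
  by apply: eq_bigr => t _; rewrite /F subrK.
have := hNE.2 j s hs; rewrite /J upd_eq !link_costs_fin ?lee_fin.
- rewrite JE [X in _ <= X](eq_bigr (fun t => F t (s t))) => [|t _]; last by rewrite tot_upd.
  by rewrite sum_move_flow // /F !addrA !subrK; lra.
- move=> t; rewrite tot_upd /s /move_flow; case: eqVneq => [->|_].
    by right; rewrite addrA subrK; lra.
  case: eqVneq => [->|_]; first by right; rewrite addrA subrK.
  by rewrite subrK; exact: NEP_below_cap.
- exact: NEP_below_cap.
Qed.

(* If user [j] put more than [fstar l] on [l], some link [m] would be less loaded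
   than at the optimum.  Moving [e] from [m] to [l] cannot improve the optimum and
   moving [e] of user [j] from [l] to [m] cannot improve its cost; but the marginal
   costs compare strictly the other way round. *)
Lemma NEP_le_opt j l : fhat j l <= fstar l.
Proof.
rewrite leNgt; apply/negP => opt_lt.
set x := fhat j l in opt_lt *; set p := fstar l in opt_lt *; set Y := tot fhat l.
have xY : x <= Y by apply: share_le_tot NEP_feasible.
have [m ym] : exists m, tot fhat m < fstar m.
  apply: (exists_lt_of_sum_eq (l := l)); last by rewrite -/Y -/p; lra.
  by rewrite (sum_tot NEP_feasible) opt_sum.
set y := tot fhat m in ym *; set z := fstar m in ym *; set b := fhat j m.
have lm : l != m by apply/eqP => lm; move: ym; rewrite /y /z -lm -/Y -/p; lra.
have p0 : 0 <= p by apply: opt_ge0.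
have y0 : 0 <= y by apply: tot_ge0 NEP_feasible.
have by_ : 0 <= b <= y by rewrite NEP_ge0 (share_le_tot _ _ NEP_feasible).
have Yc : Y < c l by case: (NEP_below_cap j l) => [|//]; rewrite -/x; lra.
have zc : z < c m by case: (opt_below_cap m) => [|//]; rewrite -/z; lra.
pose e := Num.min (x - p) ((z - y) / 2).
have e0 : 0 < e by rewrite lt_min; apply/andP; split; lra.
have ex : e <= x - p by rewrite ge_min lexx.
have ezy : e <= (z - y) / 2 by rewrite ge_min lexx orbT.
(* The side conditions of the four facts below are left as premises for [lra]. *)
have sys := opt_move_ge lm (_ : 0 < e <= z) (_ : p + e < c l).
have nash := NEP_move_ge lm (_ : 0 < e <= x) (_ : y + e < c m).
rewrite -/x -/p -/Y -/y -/z -/b in sys nash.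
have := marginal_cost_le (good_link_cost_incr (hT l)) (good_link_cost_convex (hT l))
  e0 (_ : 0 <= p <= x - e) (_ : 0 <= p <= Y - e) (_ : Y - e + e < c l).
have := marginal_cost_lt (good_link_cost_incr (hT m)) (good_link_cost_convex (hT m))
  e0 (_ : 0 <= b <= z - e) y0 (_ : y < z - e) (_ : z - e + e < c m).
rewrite !subrK /=; lra.
Qed.

End OptimumAndEquilibrium.

Theorem lemma3p3 (R : realType) (L : nat) (c : 'I_L -> R) (r : 'I_2 -> R)
  (T : R -> R)
  (hc : forall l, 0 < c l)
  (hr : forall i, 0 < r i)
  (hR : \sum_(i < 2) r i < \sum_(l < L) c l)
  (hT : forall l, good_link_cost T (c l))
  (fhat : profile R 2 L)
  (hNE : NEP T c r fhat)
  (hNEuniq : forall f, NEP T c r f -> f = fhat)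
  (fstar : 'I_L -> R)
  (hstar_feas : exists f, feasible r f /\ forall l, tot f l = fstar l)
  (hstar_opt : forall f, feasible r f -> (syscost T c fstar <= syscost T c (tot f))%E) :
  forall k : 'I_2, exists fbar : profile R 2 L,
    feasible r fbar /\ (forall l, tot fbar l = fstar l) /\
    (J T c fhat k <= J T c fbar k)%E.
Proof.
move=> k; pose j := lift k ord0.
have sum2 (F : 'I_2 -> R) : \sum_i F i = F k + F j by rewrite (bigD1_ord k) // big_ord1.
have r0 i : 0 <= r i by apply: ltW.
pose s l := fstar l - fhat j l.
have hs : strategy (r k) s.
  split=> [l|]; first by rewrite subr_ge0 (NEP_le_opt r0 hR hT hstar_feas hstar_opt hNE).
  rewrite sumrB (opt_sum hstar_feas) sum2.
  by case: (NEP_feasible hNE j) => _ ->; ring.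
exists (upd fhat k s); split; first exact: feasible_upd (NEP_feasible hNE) hs.
split; last exact: hNE.2 k s hs.
by move=> l; rewrite tot_upd /tot sum2 /s; ring.
Qed.
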